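(* Let $(\mathcal{X},d)$ be a finite metric space with initial forest given by a partition $\mathcal{P}=\{P_1,\dots,P_t\}$ and spanning trees $T_i$ on the parts with edge union $E_t$, and let $\gamma=\gamma(\mathcal{P})$ be its overlap parameter. Let $\textsf{MFC-Approx}$ be the algorithm $\textsf{MultiRepMFC}(R)$ where each $R_i=\{r_i\}$ consists of a single arbitrary point $r_i\in P_i$. Then $\textsf{MFC-Approx}$ returns a spanning tree of weight at most $2$ times the optimal MFC value (a 2-approximation for MFC) and at most $2\gamma$ times the weight of a minimum spanning tree of $G_{\mathcal{X}}$ (a $2\gamma$-approximation for metric MST).
   Context: $(\mathcal{X},d)$ is a finite metric space and $G_{\mathcal{X}}$ is the complete graph on $\mathcal{X}$ with edge weights $w_{\mathcal{X}}(u,v)=d(u,v)$; for an edge set $F$, $w_{\mathcal{X}}(F)=\sum_{e\in F}w_{\mathcal{X}}(e)$. For $A,B\subseteq\mathcal{X}$, $d(A,B)=\min_{a\in A,b\in B}d(a,b)$. An initial forest consists of a partition $\mathcal{P}=\{P_1,\dots,P_t\}$ of $\mathcal{X}$ and, for each $i$, a spanning tree $T_i$ of the complete graph on $P_i$; $E_t$ is the union of their edge sets. The Metric Forest Completion (MFC) problem: find a minimum-weight spanning tree of $G_{\mathcal{X}}$ containing $E_t$. Overlap parameter: with $\mathcal{T}_{\mathcal{X}}$ the set of minimum spanning trees of $G_{\mathcal{X}}$ and $T(\mathcal{P})$ the edges of $T$ with both endpoints in the same part, $\gamma(\mathcal{P})=w_{\mathcal{X}}(E_t)/\max_{T\in\mathcal{T}_{\mathcal{X}}}w_{\mathcal{X}}(T(\mathcal{P}))$.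 Algorithm $\textsf{MultiRepMFC}(R)$, for nonempty $R_i\subseteq P_i$: for each pair $i\ne j$ set $\hat w(v_i,v_j)=\min\{d(P_i,R_j),d(P_j,R_i)\}$ and record a point pair attaining it; compute a minimum spanning tree of the complete graph on $v_1,\dots,v_t$ with weights $\hat w$; return $E_t$ together with the recorded point pairs of the edges of this tree. *)

From HB Require Import structures.
From mathcomp Require Import all_boot all_order all_algebra.
Set Implicit Arguments. Unset Strict Implicit. Unset Printing Implicit Defensive.
Import Order.TTheory GRing.Theory Num.Theory.
Local Open Scope ring_scope.

Section Graphs.
Variable R : realFieldType.
Variable U : finType.

(* Undirected simple graphs on U: an edge is a 2-element subset of U. *)

(* Weight of an edge {a,b} under a (symmetric) cost c: (c a b + c b a)/2 = c a b. *)
Definition wedge (c : U -> U -> R) (e : {set U}) : R :=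
  (\sum_(x in e) \sum_(y in e | x != y) c x y) / 2%:R.

Definition wset (c : U -> U -> R) (F : {set {set U}}) : R :=
  \sum_(e in F) wedge c e.

Definition adj (F : {set {set U}}) : rel U :=
  fun x y => (x != y) && ([set x; y] \in F).

Definition edges_in (V : {set U}) (F : {set {set U}}) : bool :=
  [forall e in F, (#|e| == 2%N) && (e \subset V)].

Definition connected_on (V : {set U}) (F : {set {set U}}) : bool :=
  [forall x in V, forall y in V, connect (adj F) x y].

Definition acyclic (F : {set {set U}}) : bool :=
  [forall e in F, forall x, forall y,
     ((e == [set x; y]) && (x != y)) ==> ~~ connect (adj (F :\ e)) x y].

Definition is_spanning_tree (V : {set U}) (F : {set {set U}}) : bool :=
  [&& edges_in V F, connected_on V F & acyclic F].

Definition is_mst (V : {set U}) (c : U -> U -> R) (F : {set {set U}}) : bool :=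
  is_spanning_tree V F &&
  [forall F' : {set {set U}}, is_spanning_tree V F' ==> (wset c F <= wset c F')].

End Graphs.

Section MFC.
Variable R : realFieldType.
Variable T : finType.

Definition is_metric (d : T -> T -> R) : Prop :=
  (forall x y, d x y = 0 <-> x = y) /\
  (forall x y, d x y = d y x) /\
  (forall x y z, d x z <= d x y + d y z).

Definition Et (P : {set {set T}}) (tr : {set T} -> {set {set T}}) : {set {set T}} :=
  \bigcup_(B in P) tr B.

Definition intra (P : {set {set T}}) (F : {set {set T}}) : {set {set T}} :=
  [set e in F | [exists B in P, e \subset B]].

(* max over the MSTs T of G_X of w(T(P)) (weights are >= 0 and MSTs exist,
   so the default 0 does not matter) *)
Definition max_intra_mst (d : T -> T -> R) (P : {set {set T}}) : R :=
  \big[Num.max/0]_(F : {set {set T}} | is_mst [set: T] d F) wset d (intra P F).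

Definition gamma (d : T -> T -> R) (P : {set {set T}})
  (tr : {set T} -> {set {set T}}) : R :=
  wset d (Et P tr) / max_intra_mst d P.

(* Candidate point pairs for the pair of parts (B, C) in MultiRepMFC with
   R_B = {r B}, R_C = {r C}: pairs realizing d(B, R_C) or d(C, R_B),
   written as (point of B, point of C). *)
Definition cand (r : {set T} -> T) (B C : {set T}) (x y : T) : bool :=
  ((x \in B) && (y == r C)) || ((x == r B) && (y \in C)).

(* rec B C is a recorded point pair attaining
   hat w(v_B, v_C) = min{d(B, R_C), d(C, R_B)} *)
Definition rec_ok (d : T -> T -> R) (P : {set {set T}}) (r : {set T} -> T)
  (rec : {set T} -> {set T} -> T * T) : Prop :=
  forall B C, B \in P -> C \in P -> B != C ->
    [/\ cand r B C (rec B C).1 (rec B C).2,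
        (forall a b, cand r B C a b -> d (rec B C).1 (rec B C).2 <= d a b)
      & rec C B = ((rec B C).2, (rec B C).1)].

Definition hatw (d : T -> T -> R) (rec : {set T} -> {set T} -> T * T)
  (B C : {set T}) : R := d (rec B C).1 (rec B C).2.

Definition mfc_output (P : {set {set T}}) (tr : {set T} -> {set {set T}})
  (rec : {set T} -> {set T} -> T * T) (M : {set {set {set T}}}) : {set {set T}} :=
  Et P tr :|: [set [set (rec B C).1; (rec B C).2] | B in P, C in P & [set B; C] \in M].

End MFC.

(* The output is a spanning tree: the initial trees lie in disjoint parts, and
   the link recorded for an edge {B, C} of M joins two vertices that are not yet
   connected, since contracting every part to a point maps the forest built so
   far into M minus {B, C}.
   For the weight, let F be any connected spanning graph.  Contracting the parts
   turns the edges of F between different parts into a connected graph on the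
   parts; it contains a spanning tree S oriented so that every part is the head
   of at most one edge of S.  An edge {pt a, pt b} of S with head pt b has
   hat w <= d(a, r (pt b)) <= d(a, b) + w(T_(pt b)), hence
   w(out) <= w(E_t) + hat w(M) <= w(E_t) + hat w(S) <= 2 w(E_t) + w(F \ F(P)).
   An MFC-optimal F contains E_t, which gives the factor 2; an MST T maximising
   w(T(P)), for which w(T(P)) <= w(E_t) by an exchange argument, gives 2 gamma. *)

From HB Require Import structures.
From mathcomp Require Import all_boot all_order all_algebra.
From mathcomp Require Import lra.
Set Implicit Arguments. Unset Strict Implicit. Unset Printing Implicit Defensive.
Import Order.TTheory GRing.Theory Num.Theory.
Local Open Scope ring_scope.

Section Connect.
Variables (T1 T2 : finType).

Lemma connect_homo (e1 : rel T1) (e2 : rel T2) (f : T1 -> T2) :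
  (forall u v, e1 u v -> connect e2 (f u) (f v)) ->
  forall x y, connect e1 x y -> connect e2 (f x) (f y).
Proof.
move=> e12 x _ /connectP [p pth ->]; elim: p x pth => [|z p IH] x /=.
  by move=> _; apply: connect0.
by case/andP=> /e12 exz /IH; apply: connect_trans.
Qed.

Lemma connect_restrict (e e' : rel T1) (K : {pred T1}) :
  {in K, forall u v, e u v -> e' u v && (v \in K)} ->
  {in K, forall x y, connect e x y -> connect e' x y}.
Proof.
move=> ee' x xK _ /connectP [p pth ->]; elim: p x xK pth => [|z p IH] x xK /=.
  by move=> _; apply: connect0.
case/andP=> /(ee' x xK) /andP [e'xz zK] /(IH z zK).
exact: connect_trans (connect1 e'xz).
Qed.

End Connect.

Section SimpleGraphs.
Variable U : finType.
Implicit Types (F G S : {set {set U}}) (K W : {set U}).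

Lemma eq_set2 (u v x y : U) :
  [set u; v] = [set x; y] -> (u = x /\ v = y) \/ (u = y /\ v = x).
Proof.
move=> E; have := set21 u v; have := set22 u v; have := set21 x y; have := set22 x y.
rewrite -{1 2}E {3 4}E !inE.
by do 4 case/orP=> /eqP ?; subst; auto.
Qed.

Lemma adj_sym F : symmetric (adj F).
Proof. by move=> x y; rewrite /adj eq_sym setUC. Qed.

Lemma connect_adjC F x y : connect (adj F) x y = connect (adj F) y x.
Proof. exact: (sym_connect_sym (adj_sym F)). Qed.

Lemma connect_adjS F F' x y :
  F \subset F' -> connect (adj F) x y -> connect (adj F') x y.
Proof.
move=> sFF'; apply: connect_sub x y => u v /andP [nuv uvF].
by apply: connect1; rewrite /adj nuv (subsetP sFF').
Qed.

Lemma connect_setU1 F x y u v :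
  connect (adj ([set x; y] |: F)) u v ->
  [|| connect (adj F) u v,
      connect (adj F) u x && connect (adj F) y v
    | connect (adj F) u y && connect (adj F) x v].
Proof.
pose c := connect (adj F).
pose K := [pred w | [|| c u w, c u x && c y w | c u y && c x w]].
have cc w : c w w by apply: connect0.
have cut : closed (adj ([set x; y] |: F)) K.
  apply: (intro_closed (connect_adjC _)) => w w' /andP [nww'].
  case/setU1P => [/eq_set2 [[-> ->] | [-> ->]] | ww'F] /=.
  - by case/or3P=> [h | /andP [h _] | /andP [h _]]; rewrite !inE /= h ?cc ?orbT.
  - by case/or3P=> [h | /andP [h _] | /andP [h _]]; rewrite !inE /= h ?cc ?orbT.
  have ww' : c w w' by apply: connect1; rewrite /adj nww'.
  case/or3P=> [uw | /andP [ux yw] | /andP [uy xw]]; rewrite !inE /=.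
  - by apply/or3P; constructor 1; apply: connect_trans uw ww'.
  - by apply/or3P; constructor 2; rewrite ux; apply: connect_trans yw ww'.
  - by apply/or3P; constructor 3; rewrite uy; apply: connect_trans xw ww'.
move=> /(closed_connect cut) uKvK; have : v \in K by rewrite -uKvK !inE /= cc.
exact.
Qed.

Lemma acyclic_setU1 F x y :
  x != y -> ~~ connect (adj F) x y -> acyclic F -> acyclic ([set x; y] |: F).
Proof.
move=> nxy nc /forall_inP acF; have xyF : [set x; y] \notin F.
  by apply: contra nc => xyF; apply: connect1; rewrite /adj nxy.
apply/forall_inP => e eF; apply/forallP => u; apply/forallP => v.
apply/implyP => /andP [/eqP euv nuv].
case: (eqVneq e [set x; y]) => [exy | nexy].
  rewrite exy setU1K //; move: exy; rewrite euv => /eq_set2 [[-> ->] | [-> ->]] //.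
  by rewrite connect_adjC.
have {}eF : e \in F by move: eF; rewrite !inE (negbTE nexy).
have nc' : ~~ connect (adj (F :\ e)) u v.
  have /forallP /(_ u) /forallP /(_ v) /implyP := acF e eF; apply.
  by rewrite euv eqxx nuv.
have -> : ([set x; y] |: F) :\ e = [set x; y] |: (F :\ e).
  apply/setP => f; rewrite !inE.
  by case: (eqVneq f e) => [-> | //]; rewrite (negbTE nexy).
apply: contra nc' => /connect_setU1.
have uv : connect (adj F) u v by apply: connect1; rewrite /adj nuv -euv.
have sF := connect_adjS (subsetDl F [set e]).
case/or3P=> [// | /andP [ux yv] | /andP [uy xv]]; case/negP: nc.
- apply: connect_trans (_ : connect _ x u) (connect_trans uv _).
    by rewrite connect_adjC; apply: sF.
  by rewrite connect_adjC; apply: sF.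
- apply: connect_trans (sF _ _ xv) (connect_trans _ (sF _ _ uy)).
  by rewrite connect_adjC.
Qed.

Lemma spanning_tree_extend K S u v :
  is_spanning_tree K S -> u \in K -> v \notin K ->
  is_spanning_tree (v |: K) ([set u; v] |: S).
Proof.
case/and3P=> /forall_inP eS /forall_inP cS aS uK vK.
have nuv : u != v by apply: contraNneq vK => <-.
have sS : S \subset [set u; v] |: S by apply: subsetUr.
have Kcl : closed (adj S) K.
  apply: (intro_closed (connect_adjC S)) => w w' /andP [_ ww'S] _.
  by have /andP [_ /subsetP] := eS _ ww'S; apply; apply: set22.
have cu w : w \in v |: K -> connect (adj ([set u; v] |: S)) u w.
  case/setU1P=> [-> | wK]; first by apply: connect1; rewrite /adj nuv setU11.
  by apply: connect_adjS sS _; have /forall_inP := cS u uK; apply.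
apply/and3P; split.
- apply/forall_inP => e /setU1P [-> | eS'].
    rewrite cards2 nuv /=; apply/subsetP => w /set2P [] ->;
    by rewrite !inE ?uK ?eqxx ?orbT.
  by have /andP [-> eK] := eS e eS'; apply: subset_trans eK (subsetUr _ _).
- apply/forall_inP => w1 w1K; apply/forall_inP => w2 w2K.
  by apply: connect_trans (cu _ w2K); rewrite connect_adjC cu.
- apply: acyclic_setU1 nuv _ aS.
  by apply: contraNN vK => /(closed_connect Kcl) <-.
Qed.

Lemma exists_crossing_edge W G K x y :
  connected_on W G -> x \in K -> x \in W -> y \in W -> y \notin K ->
  exists u v, [/\ u \in K, v \notin K & adj G u v].
Proof.
move=> cG xK xW yW yK.
have cxy : connect (adj G) x y by have /forall_inP := forall_inP cG x xW; apply.
suff: [exists u, exists v, [&& u \in K, v \notin K & adj G u v]].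
  by case/existsP=> u /existsP [v /and3P [uK vK uv]]; exists u, v.
apply: contraT => none; move: yK.
suff Kcl : closed (adj G) K by rewrite -(closed_connect Kcl cxy) xK.
apply: (intro_closed (connect_adjC G)) => u v uv uK; apply: contraT => vK.
by case/negP: none; apply/existsP; exists u; apply/existsP; exists v; rewrite uK vK.
Qed.

Definition oriented_spanning_tree G K S (phi : {set U} -> U) :=
  [/\ S \subset G, is_spanning_tree K S,
      {in S, forall e, phi e \in e} & {in S &, injective phi}].

Lemma oriented_spanning_tree_extend G K S phi u v :
  oriented_spanning_tree G K S phi -> u \in K -> v \notin K -> adj G u v ->
  oriented_spanning_tree G (v |: K) ([set u; v] |: S)
    (fun e => if e == [set u; v] then v else phi e).
Proof.
case=> SG tS phiS phiI uK vK /andP [_ uvG].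
have phiK e : e \in S -> phi e \in K.
  move=> eS; case/and3P: tS => /forall_inP /(_ e eS) /andP [_ /subsetP eK] _ _.
  exact/eK/phiS.
split; first by rewrite subUset sub1set uvG SG.
- exact: spanning_tree_extend.
- move=> e; rewrite !inE; case: eqP => [-> | _] /= eS; first exact: set22.
  exact: phiS.
move=> e f; rewrite !inE.
case: (eqVneq e [set u; v]) => [-> | ne]; case: (eqVneq f [set u; v]) => [-> | nf] //=.
- by move=> _ /phiK fK ef; move: vK; rewrite ef fK.
- by move=> /phiK eK _ ef; move: vK; rewrite -ef eK.
- exact: phiI.
Qed.

Lemma exists_oriented_spanning_tree W G x0 :
  x0 \in W -> edges_in W G -> connected_on W G ->
  exists S phi, oriented_spanning_tree G W S phi.
Proof.
move=> x0W /forall_inP eG cG.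
suff grow n K S phi : #|W :\: K| = n -> x0 \in K -> K \subset W ->
    oriented_spanning_tree G K S phi -> exists S phi, oriented_spanning_tree G W S phi.
  apply: (grow _ [set x0] set0 (fun=> x0) erefl (set11 x0)); first by rewrite sub1set.
  split; [exact: sub0set | | by move=> e; rewrite inE | by move=> e; rewrite inE].
  apply/and3P; split; try by apply/forall_inP => e; rewrite inE.
  by apply/forall_inP => x /set1P ->; apply/forall_inP => y /set1P ->; apply: connect0.
elim: n K S phi => [|n IH] K S phi cardK x0K KW tS.
  suff -> : W = K by exists S, phi.
  by apply/eqP; rewrite eqEsubset KW andbT -setD_eq0 -cards_eq0 cardK.
have /set0Pn [y /setDP [yW yK]] : W :\: K != set0 by rewrite -card_gt0 cardK.
have [u [v [uK vK uv]]] := exists_crossing_edge cG x0K x0W yW yK.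
have vW : v \in W.
  by case/andP: uv => _ /eG /andP [_ /subsetP]; apply; apply: set22.
apply: IH (oriented_spanning_tree_extend tS uK vK uv).
- have := cardsD1 v (W :\: K); rewrite cardK inE vK vW add1n => -[->].
  by rewrite setDDl [K :|: _]setUC.
- exact: setU1r.
- by rewrite subUset sub1set vW KW.
Qed.

Lemma exists_spanning_tree_sub W G :
  edges_in W G -> connected_on W G ->
  exists2 S : {set {set U}}, S \subset G & is_spanning_tree W S.
Proof.
case: (set_0Vmem W) => [-> _ _ | [x0 x0W] eG cG].
  exists set0; rewrite ?sub0set //; apply/and3P; split;
  by apply/forall_inP => x; rewrite inE.
by have [S [_ [SG tS _ _]]] := exists_oriented_spanning_tree x0W eG cG; exists S.
Qed.

End SimpleGraphs.

Section Sums.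
Variable R : realFieldType.

Lemma ler_sum_subset (I : finType) (A B : {set I}) (G : I -> R) :
  A \subset B -> {in B, forall i, 0 <= G i} ->
  \sum_(i in A) G i <= \sum_(i in B) G i.
Proof.
move=> sAB G0; rewrite [leRHS](big_setID A) /= (setIidPr sAB) lerDl.
by apply: sumr_ge0 => i /setDP [iB _]; apply: G0.
Qed.

Lemma ler_sum_imset (I J : finType) (h : I -> J) (A : {set I}) (G : J -> R) :
  (forall j, 0 <= G j) -> \sum_(j in h @: A) G j <= \sum_(i in A) G (h i).
Proof.
move=> G0; rewrite (partition_big_imset h) /=.
apply: ler_sum => _ /imsetP [i iA ->]; rewrite (bigD1 i) ?iA ?eqxx //=.
by rewrite lerDl sumr_ge0.
Qed.

Lemma ler_sum_inj (I J : finType) (h : I -> J) (A : {set I}) (B : {set J})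
    (G : J -> R) :
  {in A &, injective h} -> {in A, forall i, h i \in B} ->
  {in B, forall j, 0 <= G j} -> \sum_(i in A) G (h i) <= \sum_(j in B) G j.
Proof.
move=> hI hB G0; rewrite -(big_imset _ hI) /=; apply: ler_sum_subset => //.
by apply/subsetP => _ /imsetP [i iA ->]; apply: hB.
Qed.

End Sums.

Section Weights.
Variables (R : realFieldType) (U : finType).
Implicit Types (c d : U -> U -> R) (F : {set {set U}}).

Lemma wedge_set2 c x y : x != y -> wedge c [set x; y] = (c x y + c y x) / 2%:R.
Proof.
move=> nxy; rewrite /wedge; congr (_ / _).
have nyx : x \notin [set y] by rewrite inE.
under eq_bigr do rewrite big_mkcondr /= (big_setU1 _ nyx) /= big_set1.
rewrite (big_setU1 _ nyx) /= big_set1 !eqxx (negbTE nxy) eq_sym (negbTE nxy) /=.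
by rewrite addr0 add0r addrC.
Qed.

Section Nonnegative.
Variable c : U -> U -> R.
Hypothesis c_ge0 : forall x y, 0 <= c x y.

Lemma wedge_ge0 e : 0 <= wedge c e.
Proof. by rewrite divr_ge0 ?ler0n ?sumr_ge0 // => x _; rewrite sumr_ge0. Qed.

Lemma wset_ge0 F : 0 <= wset c F.
Proof. by rewrite sumr_ge0 // => e _; apply: wedge_ge0. Qed.

Lemma wset_subset F F' : F \subset F' -> wset c F <= wset c F'.
Proof. by move=> sFF'; apply: ler_sum_subset => // e _; apply: wedge_ge0. Qed.

Lemma wset_setU F F' : wset c (F :|: F') <= wset c F + wset c F'.
Proof.
rewrite /wset (big_setID F) /= setUK setDUl setDv set0U lerD2l.
by apply: wset_subset; apply: subsetDl.
Qed.

End Nonnegative.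

Lemma wset_mst_eq (V : {set U}) c F F' :
  is_mst V c F -> is_mst V c F' -> wset c F = wset c F'.
Proof.
case/andP=> tF /forallP Fmin /andP [tF' /forallP F'min].
by apply/le_anti; rewrite (implyP (Fmin F')) ?(implyP (F'min F)).
Qed.

Section Metric.
Variable d : U -> U -> R.
Hypothesis dm : is_metric d.

Lemma metric_ge0 x y : 0 <= d x y.
Proof.
have [d0 [dC dT]] := dm; have := dT x y x.
by rewrite (proj2 (d0 x x) erefl) [d y x]dC; lra.
Qed.

Lemma wedge_metric x y : x != y -> wedge d [set x; y] = d x y.
Proof. by case: dm => _ [dC _] nxy; rewrite wedge_set2 // dC; lra. Qed.

Lemma connect_metric_le F x y : connect (adj F) x y -> d x y <= wset d F.
Proof.
have [d0 [_ dT]] := dm.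
elim: {F}_.+1 {-2}F (ltnSn #|F|) x y => // n IH F ltF x _ /connectP [p pth ->].
case: (shortenP pth) => -[|z q] /=.
  by move=> _ _ _; rewrite (proj2 (d0 x x) erefl) wset_ge0 //; apply: metric_ge0.
case/andP=> /andP [nxz xzF] zq /andP [xzq _] _.
set e := [set x; z].
have ltF' : (#|F :\ e| < n)%N.
  by rewrite -ltnS (leq_trans _ ltF) // ltnS (cardsD1 e F) xzF.
have zq' : path (adj (F :\ e)) z q.
  apply: (sub_in_path (P := predC1 x)) zq; last first.
    by apply/allP => w /= wzq; apply: contraNneq xzq => <-.
  move=> u w /= ux wx /andP [nuw uwF]; rewrite /adj nuw !inE uwF andbT.
  apply/eqP => uwe; have : x \in [set u; w] by rewrite uwe set21.
  by rewrite !inE ![x == _]eq_sym (negbTE ux) (negbTE wx).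
have := IH _ ltF' z (last z q) (introT connectP (ex_intro2 _ _ q zq' erefl)).
rewrite /wset (big_setD1 e xzF) /= wedge_metric // => le_zq.
by apply: le_trans (dT x z _) _; rewrite lerD2l.
Qed.

End Metric.
End Weights.

Section MultiRepMFC.
Variables (R : realFieldType) (T : finType) (d : T -> T -> R).
Variables (P : {set {set T}}) (tr : {set T} -> {set {set T}}).
Variables (r : {set T} -> T) (rec : {set T} -> {set T} -> T * T).
Variable M : {set {set {set T}}}.
Hypotheses (dm : is_metric d) (hP : partition P [set: T]).
Hypothesis htr : forall B, B \in P -> is_spanning_tree B (tr B).
Hypotheses (hr : forall B, B \in P -> r B \in B) (hrec : rec_ok d P r rec).
Hypothesis hM : is_mst P (hatw d rec) M.

Implicit Types (F : {set {set T}}) (B C e : {set T}) (x y : T).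

Local Notation pt := (pblock P).
Local Notation hw := (hatw d rec).
Local Notation E := (Et P tr).
Local Notation out := (mfc_output P tr rec M).

Let d_ge0 := metric_ge0 dm.

Lemma hatw_ge0 B C : 0 <= hw B C.
Proof. exact: d_ge0. Qed.

Lemma pt_mem x : pt x \in P.
Proof. by case/and3P: hP => /eqP coverP _ _; rewrite pblock_mem // coverP. Qed.

Lemma mem_pt x : x \in pt x.
Proof. by case/and3P: hP => /eqP coverP _ _; rewrite mem_pblock coverP. Qed.

Lemma pt_eq B x : B \in P -> x \in B -> pt x = B.
Proof. by case/and3P: hP => _ tiP _; apply: def_pblock. Qed.

Lemma rec_mem B C : B \in P -> C \in P -> B != C ->
  (rec B C).1 \in B /\ (rec B C).2 \in C.
Proof.
move=> BP CP nBC; have [+ _ _] := hrec BP CP nBC.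
by case/orP=> [/andP [-> /eqP ->] | /andP [/eqP -> ->]]; split=> //; apply: hr.
Qed.

Lemma rec_swap B C : B \in P -> C \in P -> B != C ->
  rec C B = ((rec B C).2, (rec B C).1).
Proof. by move=> BP CP nBC; have [_ _ ->] := hrec BP CP nBC. Qed.

Lemma hatw_le B C a : B \in P -> C \in P -> B != C -> a \in B -> hw B C <= d a (r C).
Proof.
move=> BP CP nBC aB; have [_ + _] := hrec BP CP nBC; apply.
by rewrite /cand aB eqxx.
Qed.

Lemma hatw_sym B C : B \in P -> C \in P -> B != C -> hw B C = hw C B.
Proof.
by have [_ [dC _]] := dm; move=> BP CP nBC; rewrite /hatw (rec_swap BP CP nBC) dC.
Qed.

Lemma wedge_hatw B C : B \in P -> C \in P -> B != C -> wedge hw [set B; C] = hw B C.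
Proof.
by move=> BP CP nBC; rewrite wedge_set2 // -(hatw_sym BP CP nBC); lra.
Qed.

Definition link B C := [set (rec B C).1; (rec B C).2].

(* Chosen so that [mfc_output P tr rec M] is convertible to [Et P tr :|: links]. *)
Definition links := [set link B C | B in P, C in P & [set B; C] \in M].

Lemma rec_neq B C : B \in P -> C \in P -> B != C -> (rec B C).1 != (rec B C).2.
Proof.
move=> BP CP nBC; have [aB bC] := rec_mem BP CP nBC.
by apply: contraNneq nBC => ab; rewrite -(pt_eq BP aB) ab (pt_eq CP bC).
Qed.

Lemma link_swap B C : B \in P -> C \in P -> B != C -> link C B = link B C.
Proof. by move=> BP CP nBC; rewrite /link (rec_swap BP CP nBC) setUC. Qed.

Lemma wedge_link B C : B \in P -> C \in P -> B != C -> wedge d (link B C) = hw B C.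
Proof. by move=> BP CP nBC; rewrite (wedge_metric dm) // rec_neq. Qed.

Lemma imset_pt_link B C : B \in P -> C \in P -> B != C -> pt @: link B C = [set B; C].
Proof.
move=> BP CP nBC; have [aB bC] := rec_mem BP CP nBC.
by rewrite imsetU1 imset_set1 (pt_eq BP aB) (pt_eq CP bC).
Qed.

Lemma M_edge B C : [set B; C] \in M -> [/\ B \in P, C \in P & B != C].
Proof.
case/andP: hM => /and3P [/forall_inP eM _ _] _ /eM /andP [BC2 /subsetP sub].
have nBC : B != C by apply: contraTneq BC2 => ->; rewrite setUid cards1.
by rewrite nBC !sub // !inE eqxx ?orbT.
Qed.

Lemma M_set2 F : F \in M -> exists B C, F = [set B; C].
Proof.
case/andP: hM => /and3P [/forall_inP eM _ _] _ /eM /andP [/cards2P [B [C [_ ->]]] _].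
by exists B, C.
Qed.

Lemma tr_edge B e : B \in P -> e \in tr B ->
  exists x y, [/\ x != y, e = [set x; y] & e \subset B].
Proof.
move=> BP eB; have /and3P [/forall_inP /(_ e eB) /andP [e2 eBs] _ _] := htr BP.
by have /cards2P [x [y [nxy exy]]] := e2; exists x, y.
Qed.

Lemma connect_tr B x y : B \in P -> x \in B -> y \in B -> connect (adj (tr B)) x y.
Proof.
move=> BP xB yB.
by have /and3P [_ /forall_inP /(_ x xB) /forall_inP /(_ y yB) cxy _] := htr BP.
Qed.

Lemma Et_edge e : e \in E -> exists x y, [/\ x != y, pt x = pt y & e = [set x; y]].
Proof.
case/bigcupP=> B BP eB; have [x [y [nxy exy /subsetP eBs]]] := tr_edge BP eB.
exists x, y; split=> //.
by rewrite (pt_eq BP (eBs x _)) ?(pt_eq BP (eBs y _)) // exy !inE eqxx ?orbT.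
Qed.

Lemma linksP f : f \in links ->
  exists B C, [/\ [set B; C] \in M, B \in P, C \in P, B != C & f = link B C].
Proof.
case/imset2P=> B C BP; rewrite inE => /andP [CP BCM] ->.
by have [_ _ nBC] := M_edge BCM; exists B, C.
Qed.

Lemma tr_sub_mfc_output B : B \in P -> tr B \subset out.
Proof. by move=> BP; apply: subset_trans (bigcup_sup B BP) (subsetUl _ _). Qed.

Lemma connect_mfc_output_lift B C x y :
  connect (adj M) B C -> B \in P -> x \in B -> y \in C -> connect (adj out) x y.
Proof.
have inpart D u v : D \in P -> u \in D -> v \in D -> connect (adj out) u v.
  by move=> DP uD vD; apply: connect_adjS (tr_sub_mfc_output DP) (connect_tr DP uD vD).
case/connectP=> p pth ->; elim: p B pth x => [|C' p IH] B /=.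
  by move=> _ x BP; apply: inpart.
case/andP=> /andP [nBC' BC'M] pth x BP xB yC.
have [_ C'P _] := M_edge BC'M; have [aB bC'] := rec_mem BP C'P nBC'.
apply: connect_trans (inpart _ _ _ BP xB aB) _.
apply: connect_trans (IH C' pth _ C'P bC' yC); apply: connect1.
rewrite /adj rec_neq // in_setU; apply/orP; right.
by apply/imset2P; exists B C' => //; rewrite inE C'P.
Qed.

Lemma mfc_output_connected : connected_on [set: T] out.
Proof.
apply/forall_inP => x _; apply/forall_inP => y _.
case/andP: hM => /and3P [_ /forall_inP /(_ _ (pt_mem x)) /forall_inP cM _] _.
exact: connect_mfc_output_lift (cM _ (pt_mem y)) (pt_mem x) (mem_pt x) (mem_pt y).
Qed.

Lemma mfc_output_edges : edges_in [set: T] out.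
Proof.
apply/forall_inP => e; rewrite in_setU subsetT andbT.
case/orP=> [/Et_edge [x [y [nxy _ ->]]] | /linksP [B [C [_ BP CP nBC ->]]]].
  by rewrite cards2 nxy.
by rewrite cards2 rec_neq.
Qed.

Lemma Et_acyclic : acyclic E.
Proof.
apply/forall_inP => e /bigcupP [B BP eB]; apply/forallP => x; apply/forallP => y.
apply/implyP => /andP [/eqP exy nxy]; subst e.
have /and3P [_ _ /forall_inP /(_ _ eB) /forallP /(_ x) /forallP /(_ y)] := htr BP.
rewrite eqxx nxy /=; apply: contra.
have [_ [_ [_ _ /subsetP xyB]]] := tr_edge BP eB.
apply: (connect_restrict (K := [in B])); last by apply: xyB; apply: set21.
move=> u uB v /andP [nuv]; rewrite !inE => /andP [uv_xy /bigcupP [D DP uvD]].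
have [_ [_ [_ _ /subsetP uvDs]]] := tr_edge DP uvD.
have vD := uvDs v (set22 u v).
have DB : D = B by rewrite -(pt_eq DP (uvDs u (set21 u v))) (pt_eq BP uB).
by subst D; rewrite /adj nuv !inE uv_xy uvD vD.
Qed.

Lemma connect_Et_links_pt (L : {set {set T}}) (N : {set {set {set T}}}) :
  L \subset links ->
  (forall B C, B \in P -> C \in P -> [set B; C] \in M -> link B C \in L ->
     [set B; C] \in N) ->
  forall x y, connect (adj (E :|: L)) x y -> connect (adj N) (pt x) (pt y).
Proof.
move=> /subsetP Llinks LN; apply: connect_homo => u v /andP [nuv]; rewrite in_setU.
case/orP=> [/Et_edge [a [b [_ pab uv_ab]]] | uvL].
  by case/eq_set2: uv_ab => -[-> ->]; rewrite pab connect0.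
have [B [C [BCM BP CP nBC uvBC]]] := linksP (Llinks _ uvL).
have BCN : [set B; C] \in N by apply: LN => //; rewrite -uvBC.
have := imset_pt_link BP CP nBC; rewrite -uvBC imsetU1 imset_set1.
case/eq_set2=> -[-> ->]; apply: connect1; rewrite /adj ?nBC ?BCN //.
by rewrite eq_sym nBC setUC BCN.
Qed.

Lemma M_acyclic_edge B C : [set B; C] \in M -> B != C ->
  ~~ connect (adj (M :\ [set B; C])) B C.
Proof.
case/andP: hM => /and3P [_ _ /forall_inP acM] _ BCM nBC.
by have /forallP /(_ B) /forallP /(_ C) := acM _ BCM; rewrite eqxx nBC.
Qed.

Lemma Et_links_acyclic (L : {set {set T}}) : L \subset links -> acyclic (E :|: L).
Proof.
elim: {L}_.+1 {-2}L (ltnSn #|L|) => // n IH L ltL sL.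
case: (set_0Vmem L) => [-> | [f fL]]; first by rewrite setU0; apply: Et_acyclic.
have [B [C [BCM BP CP nBC fBC]]] := linksP (subsetP sL f fL); subst f.
set L' := L :\ link B C.
have sL' : L' \subset links by apply: subset_trans (subsetDl _ _) sL.
rewrite -(setD1K fL) setUCA; apply: acyclic_setU1; first exact: rec_neq.
  have LN B' C' : B' \in P -> C' \in P -> [set B'; C'] \in M -> link B' C' \in L' ->
      [set B'; C'] \in M :\ [set B; C].
    move=> B'P C'P B'C'M; rewrite !inE B'C'M andbT => /andP [ne _].
    by apply: contraNneq ne => /eq_set2 [] [-> ->]; rewrite ?(link_swap BP CP nBC).
  have [aB bC] := rec_mem BP CP nBC.
  apply: contra (M_acyclic_edge BCM nBC) => /(connect_Et_links_pt sL' LN).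
  by rewrite (pt_eq BP aB) (pt_eq CP bC).
by apply: IH sL'; rewrite -ltnS (leq_trans _ ltL) // ltnS (cardsD1 (link B C) L) fL.
Qed.

Lemma wset_links_le : wset d links <= wset hw M.
Proof.
rewrite /wset; apply: le_trans (_ : \sum_(l in links) wedge hw (pt @: l) <= _).
  apply: ler_sum => _ /linksP [B [C [_ BP CP nBC ->]]].
  by rewrite wedge_link // imset_pt_link // wedge_hatw.
apply: (ler_sum_inj (h := fun l : {set T} => pt @: l)).
- move=> _ _ /linksP [B [C [_ BP CP nBC ->]]] /linksP [B' [C' [_ B'P C'P nBC' ->]]].
  by rewrite !imset_pt_link // => /eq_set2 [] [<- <-] //; rewrite (link_swap BP CP nBC).
- by move=> _ /linksP [B [C [BCM BP CP nBC ->]]]; rewrite imset_pt_link.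
- by move=> X _; apply: wedge_ge0 => ? ?; apply: hatw_ge0.
Qed.

Lemma sum_wset_tr_le : \sum_(B in P) wset d (tr B) <= wset d E.
Proof.
rewrite /wset pair_big_dep /=.
pose A := [set p : {set T} * {set T} | (p.1 \in P) && (p.2 \in tr p.1)].
rewrite (eq_bigl [in A]); last by move=> p; rewrite inE.
apply: (ler_sum_inj (h := snd)).
- move=> [B e] [C f]; rewrite !inE /= => /andP [BP eB] /andP [CP eC] ef; subst f.
  have [x [y [_ exy /subsetP eBs]]] := tr_edge BP eB.
  have [_ [_ [_ _ /subsetP eCs]]] := tr_edge CP eC.
  have xe : x \in e by rewrite exy set21.
  by rewrite -(pt_eq BP (eBs x xe)) (pt_eq CP (eCs x xe)).
- by move=> [B e]; rewrite inE /= => /andP [BP eB]; apply/bigcupP; exists B.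
- by move=> e _; apply: (wedge_ge0 d_ge0).
Qed.

Definition contraction (F : {set {set T}}) :=
  [set pt @: e | e : {set T} in F :\: intra P F].

Lemma intra_set2 F u v :
  [set u; v] \in F -> ([set u; v] \in intra P F) = (pt u == pt v).
Proof.
move=> uvF; rewrite inE uvF /=.
apply/existsP/eqP => [[D /andP [DP /subsetP uvD]] | puv].
  by rewrite (pt_eq DP (uvD u (set21 u v))) (pt_eq DP (uvD v (set22 u v))).
exists (pt u); rewrite pt_mem /=; apply/subsetP => w /set2P [] ->; first exact: mem_pt.
by rewrite puv mem_pt.
Qed.

Lemma contraction_edge F e : edges_in [set: T] F -> e \in F :\: intra P F ->
  exists a b, [/\ e = [set a; b], pt a != pt b & pt @: e = [set pt a; pt b]].
Proof.
move=> /forall_inP eF /setDP [eF' eI].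
have /andP [/cards2P [a [b [_ eab]]] _] := eF e eF'.
have abF : [set a; b] \in F by rewrite -eab.
exists a, b; split=> //; first by rewrite -(intra_set2 abF) -eab.
by rewrite eab imsetU1 imset_set1.
Qed.

Lemma contraction_edges F : edges_in [set: T] F -> edges_in P (contraction F).
Proof.
move=> eF; apply/forall_inP => _ /imsetP [e eFi ->].
have [a [b [_ npab ->]]] := contraction_edge eF eFi.
by rewrite cards2 npab; apply/subsetP => B /set2P [] ->; apply: pt_mem.
Qed.

Lemma contraction_connected F : edges_in [set: T] F -> connected_on [set: T] F ->
  connected_on P (contraction F).
Proof.
have nonempty B : B \in P -> exists x, x \in B.
  case/and3P: hP => _ _ P0 BP; have /set0Pn [x xB] : B != set0.
    by apply: contraNneq P0 => <-.
  by exists x.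
move=> eF /forall_inP cF; apply/forall_inP => B BP; apply/forall_inP => C CP.
have [[x xB] [y yC]] := (nonempty B BP, nonempty C CP).
rewrite -(pt_eq BP xB) -(pt_eq CP yC).
apply: (connect_homo (f := pt)); last by have /forall_inP := cF x (in_setT x); apply.
move=> u v /andP [nuv uvF]; case: (eqVneq (pt u) (pt v)) => [-> | npuv].
  exact: connect0.
apply: connect1; rewrite /adj npuv; apply/imsetP; exists [set u; v].
  by rewrite inE uvF intra_set2 ?npuv.
by rewrite imsetU1 imset_set1.
Qed.

Lemma hatw_pt_le a b : pt a != pt b -> hw (pt a) (pt b) <= d a b + wset d (tr (pt b)).
Proof.
have [_ [_ dT]] := dm; move=> npab.
apply: le_trans (hatw_le (pt_mem a) (pt_mem b) npab (mem_pt a)) _.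
apply: le_trans (dT a b _) (lerD (lexx _) _).
exact (connect_metric_le dm (connect_tr (pt_mem b) (mem_pt b) (hr (pt_mem b)))).
Qed.

Lemma contraction_edge_le F e B : edges_in [set: T] F -> e \in F :\: intra P F ->
  B \in pt @: e -> wedge hw (pt @: e) <= wedge d e + wset d (tr B).
Proof.
have [_ [dC _]] := dm; move=> eF eFi.
have [a [b [-> npab ->]]] := contraction_edge eF eFi.
have nab : a != b by apply: contraNneq npab => ->.
rewrite (wedge_metric dm) // wedge_hatw ?pt_mem //.
case/set2P=> ->; last exact: hatw_pt_le.
by rewrite hatw_sym ?pt_mem // dC hatw_pt_le // eq_sym.
Qed.

Lemma contraction_tree_le F (S : {set {set {set T}}}) (phi : {set {set T}} -> {set T}) :
  edges_in [set: T] F -> S \subset contraction F ->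
  {in S, forall X, phi X \in X} -> {in S &, injective phi} ->
  wset hw S <= wset d (F :\: intra P F) + \sum_(B in P) wset d (tr B).
Proof.
move=> eF SF phiS phiI.
(* Charging each edge X of S to [tr (phi X)] plus its excess avoids choosing a
   lift in F of X: the excess is at most the weight of every lift. *)
pose excess X : R := Num.max 0 (wedge hw X - wset d (tr (phi X))).
have excess_ge0 X : 0 <= excess X by rewrite le_max lexx.
apply: le_trans (_ : _ <= \sum_(X in S) wset d (tr (phi X)) + \sum_(X in S) excess X) _.
  rewrite /wset -big_split /=; apply: ler_sum => X _.
  by rewrite -lerBlDl le_max lexx orbT.
rewrite addrC; apply: lerD.
  pose A := [set e in F :\: intra P F | pt @: e \in S].
  have SA : S \subset [set pt @: e | e : {set T} in A].
    apply/subsetP => X XS; have /imsetP [e eFi eX] := subsetP SF X XS.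
    by apply/imsetP; exists e; rewrite // inE eFi -eX.
  apply: le_trans (ler_sum_subset SA (fun X _ => excess_ge0 X)) _.
  apply: le_trans (ler_sum_imset _ _ excess_ge0) _.
  have AF : A \subset F :\: intra P F by apply/subsetP => e; rewrite inE => /andP [].
  apply: le_trans (_ : _ <= \sum_(e in A) wedge d e) _.
    apply: ler_sum => e; rewrite inE => /andP [eFi eS].
    rewrite ge_max wedge_ge0 //= lerBlDr.
    exact: contraction_edge_le eF eFi (phiS _ eS).
  exact: ler_sum_subset AF (fun e _ => wedge_ge0 d_ge0 e).
apply: (ler_sum_inj (G := fun B => wset d (tr B))) => //;
  last by move=> B _; apply: wset_ge0.
move=> X XS; have /forall_inP /(_ X (subsetP SF X XS)) /andP [_ /subsetP XP] :=
  contraction_edges eF.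
exact/XP/phiS.
Qed.

Lemma wset_M_le F : edges_in [set: T] F -> connected_on [set: T] F ->
  wset hw M <= wset d (F :\: intra P F) + wset d E.
Proof.
move=> eF cF; case: (set_0Vmem P) => [P0 | [B0 B0P]].
  have -> : M = set0.
    apply/setP => X; rewrite inE; apply/negbTE/negP => XM.
    by have [B [C XBC]] := M_set2 XM; subst X; have [] := M_edge XM; rewrite P0 inE.
  by rewrite /wset big_set0 addr_ge0 // wset_ge0.
have [S [phi [SG tS phiS phiI]]] := exists_oriented_spanning_tree B0P
  (contraction_edges eF) (contraction_connected eF cF).
have MS : wset hw M <= wset hw S by case/andP: hM => _ /forallP /(_ S) /implyP; apply.
apply: le_trans MS (le_trans (contraction_tree_le eF SG phiS phiI) _).
by rewrite lerD2l sum_wset_tr_le.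
Qed.

Lemma wset_mfc_output_le F : edges_in [set: T] F -> connected_on [set: T] F ->
  wset d out <= 2%:R * wset d E + wset d (F :\: intra P F).
Proof.
move=> eF cF; apply: le_trans (wset_setU d_ge0 _ _) _.
by have := wset_links_le; have := wset_M_le eF cF; lra.
Qed.

Lemma Et_sub_intra F : E \subset F -> E \subset intra P F.
Proof.
move=> EF; apply/subsetP => e eE; rewrite inE (subsetP EF e eE) /=.
case/bigcupP: eE => B BP eB; apply/existsP; exists B; rewrite BP /=.
by have [_ [_ [_ _ ->]]] := tr_edge BP eB.
Qed.

Lemma wset_mfc_output_le_completion F :
  is_spanning_tree [set: T] F -> E \subset F -> wset d out <= 2%:R * wset d F.
Proof.
case/and3P=> eF cF _ EF.
have le_X : wset d (F :\: intra P F) <= wset d (F :\: E).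
  exact (wset_subset d_ge0 (setDS F (Et_sub_intra EF))).
have F_split : wset d F = wset d E + wset d (F :\: E).
  by rewrite /wset (big_setID E) /= (setIidPr EF).
by have := wset_mfc_output_le eF cF; have := wset_ge0 d_ge0 (F :\: E); lra.
Qed.

Lemma wset_split_intra F : wset d F = wset d (intra P F) + wset d (F :\: intra P F).
Proof.
rewrite /wset (big_setID (intra P F)) /= (setIidPr _) //.
by apply/subsetP => e; rewrite inE => /andP [].
Qed.

Lemma connect_swap_intra F x y :
  connect (adj F) x y -> connect (adj ((F :\: intra P F) :|: E)) x y.
Proof.
apply: connect_sub x y => u v /andP [nuv uvF].
case: (eqVneq (pt u) (pt v)) => [puv | npuv].
  apply: connect_adjS (subset_trans (bigcup_sup _ (pt_mem u)) (subsetUr _ _)) _.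
  by apply: connect_tr (pt_mem u) (mem_pt u) _; rewrite puv mem_pt.
by apply: connect1; rewrite /adj nuv in_setU in_setD (intra_set2 uvF) npuv uvF.
Qed.

Lemma wset_intra_mst_le F : is_mst [set: T] d F -> wset d (intra P F) <= wset d E.
Proof.
case/andP=> /and3P [/forall_inP eF /forall_inP cF _] /forallP Fmin.
set F' := (F :\: intra P F) :|: E.
have eF' : edges_in [set: T] F'.
  apply/forall_inP => e; rewrite in_setU => /orP [/setDP [eFe _] | ]; first exact: eF.
  by case/Et_edge=> x [y [nxy _ ->]]; rewrite cards2 nxy subsetT.
have cF' : connected_on [set: T] F'.
  apply/forall_inP => x _; apply/forall_inP => y _; apply: connect_swap_intra.
  by have /forall_inP := cF x (in_setT x); apply.
have [S SF' tS] := exists_spanning_tree_sub eF' cF'.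
have FS : wset d F <= wset d S by have /implyP := Fmin S; apply.
have := le_trans FS (le_trans (wset_subset d_ge0 SF') (wset_setU d_ge0 _ _)).
by rewrite wset_split_intra; lra.
Qed.

Lemma wset_mfc_output_le_gamma Tstar : 0 < max_intra_mst d P ->
  is_mst [set: T] d Tstar -> wset d out <= 2%:R * gamma d P tr * wset d Tstar.
Proof.
move=> m_gt0 TstarP.
have [T' T'P mT'] := eq_bigmax Tstar (fun F => is_mst [set: T] d F)
  (fun F => wset d (intra P F)) TstarP (fun F _ => wset_ge0 d_ge0 _).
have {}T'P : is_mst [set: T] d T' := T'P.
have {}mT' : max_intra_mst d P = wset d (intra P T') := mT'.
have T'Tstar := wset_mst_eq T'P TstarP.
have /andP [/and3P [eT' cT' _] _] := T'P.
have out_le := wset_mfc_output_le eT' cT'.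
have m_le := wset_intra_mst_le T'P; have X_ge0 := wset_ge0 d_ge0 (T' :\: intra P T').
rewrite -mT' in m_le; rewrite /gamma -T'Tstar (wset_split_intra T') -mT'.
set m := max_intra_mst d P in m_gt0 m_le *.
set X := wset d (T' :\: _) in out_le X_ge0 *.
set g := wset d E / m.
have gm : g * m = wset d E by rewrite divfK // gt_eqF.
have g_ge1 : 1 <= g by rewrite ler_pdivlMr // mul1r.
have gX : X <= g * X by rewrite -{1}(mul1r X) ler_wpM2r.
have -> : 2%:R * g * (m + X) = 2%:R * (g * m) + 2%:R * (g * X) by rewrite mulrDr !mulrA.
by rewrite gm; lra.
Qed.

Lemma mfc_output_spanning_tree : is_spanning_tree [set: T] out && (E \subset out).
Proof.
rewrite /is_spanning_tree mfc_output_edges mfc_output_connected.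
by rewrite Et_links_acyclic ?subsetUl.
Qed.

End MultiRepMFC.

Theorem corollary1 (R : realFieldType) (T : finType) (d : T -> T -> R)
  (P : {set {set T}}) (tr : {set T} -> {set {set T}})
  (r : {set T} -> T) (rec : {set T} -> {set T} -> T * T)
  (M : {set {set {set T}}}) :
  is_metric d ->
  partition P [set: T] ->
  (forall B, B \in P -> is_spanning_tree B (tr B)) ->
  (forall B, B \in P -> r B \in B) ->
  rec_ok d P r rec ->
  is_mst P (hatw d rec) M ->
  let out := mfc_output P tr rec M in
  [/\ is_spanning_tree [set: T] out && (Et P tr \subset out),
      (forall F, is_spanning_tree [set: T] F -> Et P tr \subset F ->
         wset d out <= 2%:R * wset d F)
    & (0 < max_intra_mst d P ->
       forall Tstar, is_mst [set: T] d Tstar ->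
         wset d out <= 2%:R * gamma d P tr * wset d Tstar)].
Proof.
move=> dm hP htr hr hrec hM out; rewrite {}/out; split.
- by apply: (mfc_output_spanning_tree (d := d) (r := r)).
- by move=> F; apply: (wset_mfc_output_le_completion (r := r)).
- by move=> m_gt0 Tstar; apply: (wset_mfc_output_le_gamma (r := r)).
Qed.
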